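(* Let $\phi(z)=\sum_{j\in\mathbb{Z}}\phi_jz^j$ with $\sum_j|\phi_j|<\infty$, and set $\phi_+(z)=\sum_{j\ge0}\phi_jz^j$, $\phi_-(z)=\sum_{j<0}\phi_jz^j$. Then for every $t\in\mathbb{C}$ and $n\in\mathbb{N}$, $$\det\left(I+P_n\left(e^{tT(\phi)}-I\right)P_n\right)e^{-t\operatorname{Tr}P_nT(\phi)}=\det\left(I+P_n\left(e^{-tT(\phi_+)}e^{tT(\phi)}e^{-tT(\phi_-)}-I\right)P_n\right).$$
   Context: For a Laurent series $a(z)=\sum_ka_kz^k$, the Toeplitz matrix $T(a)$ on $\ell^2(\mathbb{N})$ has entries $T(a)_{j,k}=a_{j-k}$, $j,k\ge1$. $P_n$ is the orthogonal projection onto the first $n$ coordinates of $\ell^2(\mathbb{N})$. Determinants are Fredholm determinants. *)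

From Stdlib Require Import Reals ZArith ClassicalEpsilon.
Open Scope R_scope.

Definition Cplx : Type := (R * R)%type.
Definition Re (z : Cplx) : R := fst z.
Definition Im (z : Cplx) : R := snd z.
Definition C0 : Cplx := (0, 0).
Definition C1 : Cplx := (1, 0).
Definition RtoC (x : R) : Cplx := (x, 0).
Definition Cadd (z w : Cplx) : Cplx := (Re z + Re w, Im z + Im w).
Definition Copp (z : Cplx) : Cplx := (- Re z, - Im z).
Definition Csub (z w : Cplx) : Cplx := Cadd z (Copp w).
Definition Cmul (z w : Cplx) : Cplx :=
  (Re z * Re w - Im z * Im w, Re z * Im w + Im z * Re w).
Definition Cnorm (z : Cplx) : R := sqrt (Re z * Re z + Im z * Im z).
Fixpoint Cpow (z : Cplx) (k : nat) : Cplx :=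
  match k with O => C1 | S k' => Cmul z (Cpow z k') end.
Definition Cexp (z : Cplx) : Cplx := (exp (Re z) * cos (Im z), exp (Re z) * sin (Im z)).

Definition Cconv (u : nat -> Cplx) (l : Cplx) : Prop :=
  Un_cv (fun k => Re (u k)) (Re l) /\ Un_cv (fun k => Im (u k)) (Im l).

(* the limit of u (a classically chosen one; only meaningful if u converges) *)
Definition Clim (u : nat -> Cplx) : Cplx :=
  epsilon (inhabits C0) (fun l => Cconv u l).

Fixpoint Cpartial (u : nat -> Cplx) (N : nat) : Cplx :=
  match N with O => C0 | S N' => Cadd (Cpartial u N') (u N') end.

Definition Cseries (u : nat -> Cplx) : Cplx := Clim (Cpartial u).

Definition Csum (N : nat) (u : nat -> Cplx) : Cplx := Cpartial u N.

(* A Laurent series a(z) = sum_k a_k z^k is given by its coefficients a : Z -> Cplx. *)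
Definition abs_summable (a : Z -> Cplx) : Prop :=
  exists M : R, forall N : nat,
    sum_f_R0 (fun k => Cnorm (a (Z.of_nat k))) N
    + sum_f_R0 (fun k => Cnorm (a (- Z.of_nat (S k))%Z)) N <= M.

Definition sym_plus (a : Z -> Cplx) : Z -> Cplx :=
  fun j => if Z.leb 0 j then a j else C0.
Definition sym_minus (a : Z -> Cplx) : Z -> Cplx :=
  fun j => if Z.ltb j 0 then a j else C0.

(* Infinite matrices: entry (j,k) of an operator on l^2(N) w.r.t. the standard
   basis; index i : nat stands for the basis vector e_{i+1}. *)
Definition imat : Type := nat -> nat -> Cplx.

Definition Toep (a : Z -> Cplx) : imat := fun j k => a (Z.of_nat j - Z.of_nat k)%Z.

Definition delta (i j : nat) : Cplx := if Nat.eqb i j then C1 else C0.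

Definition mmul (A B : imat) : imat := fun j l => Cseries (fun m => Cmul (A j m) (B m l)).

Fixpoint mpow (A : imat) (k : nat) : imat :=
  match k with O => delta | S k' => mmul A (mpow A k') end.

Definition Cinv_fact (k : nat) : Cplx := RtoC (/ INR (fact k)).

Definition mexp (s : Cplx) (A : imat) : imat :=
  fun j l => Cseries (fun k => Cmul (Cmul (Cpow s k) (Cinv_fact k)) (mpow A k j l)).

Definition minor0 (f : nat -> nat -> Cplx) (j : nat) : nat -> nat -> Cplx :=
  fun a b => f (S a) (if Nat.ltb b j then b else S b).

Fixpoint Cdet (n : nat) (f : nat -> nat -> Cplx) : Cplx :=
  match n with
  | O => C1
  | S n' => Csum (S n') (fun j =>
       Cmul (Cmul (Cpow (Copp C1) j) (f 0%nat j)) (Cdet n' (minor0 f j)))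
  end.

(* Fredholm determinant det(I + P_n X P_n) = det of the n x n block (I + X)_{<n} *)
Definition det_IPnXPn (n : nat) (X : imat) : Cplx :=
  Cdet n (fun i j => Cadd (delta i j) (X i j)).

Definition trace_Pn (n : nat) (A : imat) : Cplx := Csum n (fun i => A i i).

Definition msub (A B : imat) : imat := fun i j => Csub (A i j) (B i j).

(* T(phi_+) is lower triangular and T(phi_-) strictly upper triangular, hence
   e^{-tT(phi_+)} is lower triangular with diagonal e^{-t phi_0} and e^{-tT(phi_-)} is
   upper triangular with unit diagonal.  Consequently P_n e^{-tT(phi_+)} =
   P_n e^{-tT(phi_+)} P_n and e^{-tT(phi_-)} P_n = P_n e^{-tT(phi_-)} P_n, so the n x n
   section of the triple product is the product of the three sections, and the
   determinants of the two triangular sections are e^{-n t phi_0} = e^{-t Tr P_n T(phi)}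
   and 1.  Every series met along the way has finitely many nonzero terms, whatever the
   entries of e^{tT(phi)} are. *)

From Pilot Require Import Defs.
From Stdlib Require Import Reals ZArith Lia Lra ClassicalEpsilon FunctionalExtensionality.
From Coquelicot Require Import Hierarchy Lim_seq Series PSeries ElemFct.
From mathcomp Require Import all_boot all_algebra Rstruct complex.
From mathcomp Require ring.
Import GRing.Theory.

Local Notation C0 := Defs.C0.
Local Notation C1 := Defs.C1.
Local Open Scope R_scope.

Lemma Cexp_add (z w : Cplx) : Cexp (Cadd z w) = Cmul (Cexp z) (Cexp w).
Proof.
case: z w => [a b] [c d]; rewrite /Cexp /Cadd /Cmul /=.
by rewrite exp_plus cos_plus sin_plus; congr pair; ring.
Qed.

Lemma Cexp_0 : Cexp C0 = C1.
Proof. by rewrite /Cexp /= exp_0 cos_0 sin_0 Rmult_1_l Rmult_0_r. Qed.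

Section ComplexArith.
Import ring.
Local Open Scope ring_scope.

Definition toC (z : Cplx) : R[i] := Complex z.1 z.2.

Lemma toC_inj : injective toC.
Proof. by case=> [a b] [c d] [-> ->]. Qed.

Lemma toC_add z w : toC (Cadd z w) = toC z + toC w. Proof. by []. Qed.
Lemma toC_opp z : toC (Copp z) = - toC z. Proof. by []. Qed.
Lemma toC_mul z w : toC (Cmul z w) = toC z * toC w. Proof. by []. Qed.
Lemma toC0 : toC C0 = 0. Proof. by []. Qed.
Lemma toC1 : toC C1 = 1. Proof. by []. Qed.

Lemma toC_pow z k : toC (Cpow z k) = toC z ^+ k.
Proof. by elim: k => [|k IH] //=; rewrite toC_mul IH exprS. Qed.

Lemma toC_sum N u : toC (Csum N u) = \sum_(k < N) toC (u k).
Proof. by elim: N => [|N IH]; rewrite ?big_ord0 // big_ord_recr -IH. Qed.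

Lemma factE k : fact k = k`!.
Proof. by elim: k => [|k IH] //=; rewrite IH factS mulSn. Qed.

Lemma toC_inv_fact k : toC (Cinv_fact k) = k`!%:R^-1.
Proof.
have -> : toC (Cinv_fact k) = ((INR (fact k))^-1)%:C%C by [].
by rewrite fmorphV /= INRE factE rmorph_nat.
Qed.

Lemma Caddr0 z : Cadd z C0 = z.
Proof. by apply: toC_inj; rewrite toC_add toC0 addr0. Qed.
Lemma Cadd0r z : Cadd C0 z = z.
Proof. by apply: toC_inj; rewrite toC_add toC0 add0r. Qed.
Lemma Cmulr0 z : Cmul z C0 = C0.
Proof. by apply: toC_inj; rewrite toC_mul toC0 mulr0. Qed.
Lemma Cmul0r z : Cmul C0 z = C0.
Proof. by apply: toC_inj; rewrite toC_mul toC0 mul0r. Qed.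

Lemma toC_Cexp_sum n f : toC (Cexp (Csum n f)) = \prod_(k < n) toC (Cexp (f k)).
Proof.
elim: n => [|n IH]; first by rewrite big_ord0 /= Cexp_0.
by rewrite big_ord_recr -IH /= Cexp_add toC_mul.
Qed.

Definition exp_term (z : Cplx) (k : nat) : Cplx := Cmul (Cpow z k) (Cinv_fact k).

Lemma exp_term_add z w n :
  exp_term (Cadd z w) n = Csum n.+1 (fun k => Cmul (exp_term z k) (exp_term w (n - k))).
Proof.
apply: toC_inj; rewrite toC_sum /exp_term toC_mul toC_pow toC_add toC_inv_fact.
rewrite addrC exprDn mulr_suml; apply: eq_bigr => -[k /= lekn] _.
rewrite !toC_mul !toC_pow !toC_inv_fact.
have fact_neq0 m : (m`!%:R : R[i]) != 0 by rewrite Num.Theory.pnatr_eq0 -lt0n fact_gt0.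
have bin_neq0 : ('C(n, k)%:R : R[i]) != 0 by rewrite Num.Theory.pnatr_eq0 -lt0n bin_gt0.
rewrite -mulr_natr -[in X in _ * X^-1](bin_fact (lekn : (k <= n)%N)) !natrM.
by field; rewrite bin_neq0 !fact_neq0.
Qed.

Lemma exp_term_mul s a k :
  Cmul (Cmul (Cpow s k) (Cinv_fact k)) (Cpow a k) = exp_term (Cmul s a) k.
Proof. by apply: toC_inj; rewrite /exp_term !toC_mul !toC_pow toC_mul exprMn mulrAC. Qed.

End ComplexArith.

Section FiniteSeries.

Lemma Cconv_unique u l l' : Cconv u l -> Cconv u l' -> l = l'.
Proof.
case: l l' => [a b] [c d] [ua ub] [uc ud].
by congr pair; [exact: UL_sequence ua uc | exact: UL_sequence ub ud].
Qed.

Lemma Clim_eq u l : Cconv u l -> Clim u = l.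
Proof. by move=> ul; exact: Cconv_unique (epsilon_spec _ _ (ex_intro _ l ul)) ul. Qed.

Lemma Cseries_eq_Csum u N : (forall m, (N <= m)%N -> u m = C0) -> Cseries u = Csum N u.
Proof.
move=> u0; apply: Clim_eq.
have partial_eq m : (N <= m)%N -> Cpartial u m = Csum N u.
  move/subnK <-; elim: (m - N)%N => [|d IH] //.
  by rewrite addSn /= IH u0 ?leq_addl // Caddr0.
by split=> eps eps0; exists N => m /leP Nm; rewrite /R_dist partial_eq // Rminus_diag Rabs_R0.
Qed.

Lemma Cseries_eq0 u : (forall m, u m = C0) -> Cseries u = C0.
Proof. by move=> u0; rewrite (Cseries_eq_Csum u 0). Qed.

Lemma Csum_eq0 u N : (forall m, (m < N)%N -> u m = C0) -> Csum N u = C0.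
Proof.
elim: N => [|N IH] u0 //=.
by rewrite -/(Csum N u) IH => [|m mN]; rewrite ?u0 ?Caddr0 // ltnS ltnW.
Qed.

Lemma Cseries_single u j : (forall m, m != j -> u m = C0) -> Cseries u = u j.
Proof.
move=> u0; rewrite (Cseries_eq_Csum u j.+1) => [|m jm]; last by rewrite u0 // gtn_eqF.
by rewrite /Csum /= -/(Csum j u) Csum_eq0 ?Cadd0r // => m mj; rewrite u0 // ltn_eqF.
Qed.

End FiniteSeries.

Section ExpSeries.

Definition cos_coef (k : nat) : R := (Cpow (0, 1) k).1 / INR (fact k).
Definition sin_coef (k : nat) : R := (Cpow (0, 1) k).2 / INR (fact k).

Lemma Cpow_i_even m : Cpow (0, 1) (2 * m) = ((-1) ^ m, 0).
Proof.
elim: m => [|m IH]; first by [].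
rewrite mulnS add2n /= IH /Cmul /=; congr pair; ring.
Qed.

Lemma Cpow_i_odd m : Cpow (0, 1) (2 * m).+1 = (0, (-1) ^ m).
Proof. by rewrite /= Cpow_i_even /Cmul /=; congr pair; ring. Qed.

Lemma Cpow_i_bound k : Rabs (Cpow (0, 1) k).1 <= 1 /\ Rabs (Cpow (0, 1) k).2 <= 1.
Proof.
elim: k => [|k [IH1 IH2]] /=.
  by rewrite Rabs_R1 Rabs_R0; split; lra.
by rewrite /Cmul /= !Rmult_0_l Rminus_0_l Rplus_0_l !Rmult_1_l Rabs_Ropp.
Qed.

Lemma is_series_zero : is_series (fun _ : nat => 0) 0.
Proof.
have lim0 : is_lim_seq (sum_n (fun _ : nat => 0)) (Rbar.Finite 0).
  apply: (is_lim_seq_ext (fun _ => 0)); last exact: is_lim_seq_const.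
  by move=> n; rewrite sum_n_const Rmult_0_r.
exact: lim0.
Qed.

Lemma cos_coef_even m : cos_coef (2 * m)%coq_nat = cos_n m.
Proof. by rewrite /cos_coef /cos_n multE Cpow_i_even. Qed.

Lemma cos_coef_odd m : cos_coef ((2 * m)%coq_nat + 1)%coq_nat = 0.
Proof. by rewrite /cos_coef multE plusE addn1 Cpow_i_odd /Rdiv Rmult_0_l. Qed.

Lemma sin_coef_even m : sin_coef (2 * m)%coq_nat = 0.
Proof. by rewrite /sin_coef multE Cpow_i_even /Rdiv Rmult_0_l. Qed.

Lemma sin_coef_odd m : sin_coef ((2 * m)%coq_nat + 1)%coq_nat = sin_n m.
Proof. by rewrite /sin_coef /sin_n multE plusE addn1 Cpow_i_odd. Qed.

(* Stdlib defines cos and sin by power series in x^2; [is_pseries_odd_even] turns them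
   into power series in x. *)
Lemma is_pseries_cos b : is_pseries cos_coef b (cos b).
Proof.
have := @is_pseries_odd_even cos_coef b (cos b) 0.
rewrite Rmult_0_r Rplus_0_r; apply.
- rewrite /cos; case: (exist_cos _) => l /is_series_Reals cos_l.
  apply: is_series_ext cos_l => k.
  by rewrite cos_coef_even /scal /= /mult /= /Rsqr Rmult_1_r Rmult_comm.
- apply: is_series_ext is_series_zero => k.
  by rewrite cos_coef_odd /scal /= /mult /= Rmult_0_r.
Qed.

Lemma is_pseries_sin b : is_pseries sin_coef b (sin b).
Proof.
rewrite /sin; case: (exist_sin _) => l /is_series_Reals sin_l.
have := @is_pseries_odd_even sin_coef b 0 l.
rewrite Rplus_0_l; apply.
- apply: is_series_ext is_series_zero => k.
  by rewrite sin_coef_even /scal /= /mult /= Rmult_0_r.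
- apply: is_series_ext sin_l => k.
  by rewrite sin_coef_odd /scal /= /mult /= /Rsqr Rmult_1_r Rmult_comm.
Qed.

Lemma ex_series_Rabs_pseries x c : (forall k, Rabs (c k) <= / INR (fact k)) ->
  ex_series (fun k => Rabs (scal (pow_n x k) (c k))).
Proof.
move=> c_le; apply: (ex_series_le _ (fun k => scal (pow_n (Rabs x) k) (/ INR (fact k)))).
  move=> k; rewrite /norm /= /abs /= Rabs_Rabsolu /scal /= /mult /= !pow_n_pow.
  by rewrite Rabs_mult RPow_abs; apply: Rmult_le_compat_l; [exact: Rabs_pos|exact: c_le].
by exists (exp (Rabs x)); exact: is_exp_Reals.
Qed.

Lemma Rabs_inv_fact_le k : Rabs (/ INR (fact k)) <= / INR (fact k).
Proof.
rewrite Rabs_pos_eq; first exact: Rle_refl.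
by apply/Rlt_le/Rinv_0_lt_compat/lt_0_INR; exact: lt_O_fact.
Qed.

Lemma Rabs_div_fact_le x k : Rabs x <= 1 -> Rabs (x / INR (fact k)) <= / INR (fact k).
Proof.
move=> x_le; rewrite /Rdiv Rabs_mult -[X in _ <= X]Rmult_1_l.
by apply: Rmult_le_compat; [exact: Rabs_pos|exact: Rabs_pos|exact: x_le|exact: Rabs_inv_fact_le].
Qed.

Lemma exp_term_real a k : exp_term (a, 0) k = (a ^ k / INR (fact k), 0).
Proof.
rewrite /exp_term; have -> : Cpow (a, 0) k = (a ^ k, 0).
  by elim: k => //= k ->; rewrite /Cmul /=; congr pair; ring.
by rewrite /Cmul /=; congr pair; rewrite /Rdiv; ring.
Qed.

Lemma exp_term_imag b k : exp_term (0, b) k = (b ^ k * cos_coef k, b ^ k * sin_coef k).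
Proof.
rewrite /exp_term; have -> : Cpow (0, b) k = (b ^ k * (Cpow (0, 1) k).1, b ^ k * (Cpow (0, 1) k).2).
  elim: k => [|k IH] /=; first by rewrite /Defs.C1 /= !Rmult_1_l.
  by rewrite IH /Cmul /Defs.Re /Defs.Im /=; congr pair; ring.
by rewrite /Cmul /cos_coef /sin_coef /Defs.Re /Defs.Im /=; congr pair; rewrite /Rdiv; ring.
Qed.

Lemma sum_n_Cpartial u N :
  sum_n (fun k => (u k).1) N = (Cpartial u N.+1).1 /\ sum_n (fun k => (u k).2) N = (Cpartial u N.+1).2.
Proof.
rewrite !sum_n_Reals; elim: N => [|N [IH1 IH2]] /=; first by rewrite !Rplus_0_l.
by rewrite IH1 IH2.
Qed.

Lemma Cconv_partial u x y : is_series (fun k => (u k).1) x -> is_series (fun k => (u k).2) y ->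
  Cconv (Cpartial u) (x, y).
Proof.
move=> ux uy; split; apply/is_lim_seq_Reals/is_lim_seq_incr_1.
  by apply: (is_lim_seq_ext _ _ _ (fun N => (sum_n_Cpartial u N).1)); exact: ux.
by apply: (is_lim_seq_ext _ _ _ (fun N => (sum_n_Cpartial u N).2)); exact: uy.
Qed.

(* e^{a+ib} is the Cauchy product of the series of e^a with those of cos b and sin b. *)
Lemma Cexp_series z : Cseries (exp_term z) = Cexp z.
Proof.
apply: Clim_eq; case: z => a b.
have cauchy_term n k : (Cmul (exp_term (a, 0) k) (exp_term (0, b) (n - k))) =
    (scal (pow_n a k) (/ INR (fact k)) * scal (pow_n b (n - k)) (cos_coef (n - k)),
     scal (pow_n a k) (/ INR (fact k)) * scal (pow_n b (n - k)) (sin_coef (n - k))).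
  rewrite exp_term_real exp_term_imag /Cmul /scal /= /mult /= !pow_n_pow /Defs.Re /Defs.Im /=.
  by congr pair; rewrite /Rdiv; ring.
have exp_ab n : exp_term (a, b) n =
    Csum n.+1 (fun k => Cmul (exp_term (a, 0) k) (exp_term (0, b) (n - k))).
  by rewrite -exp_term_add /Cadd /= Rplus_0_r Rplus_0_l.
have exp_a := is_exp_Reals a.
have abs_a := ex_series_Rabs_pseries a _ Rabs_inv_fact_le.
apply: Cconv_partial.
- have := is_series_mult _ _ _ _ exp_a (is_pseries_cos b) abs_a
    (ex_series_Rabs_pseries b _ (fun k => Rabs_div_fact_le _ k (Cpow_i_bound k).1)).
  apply: is_series_ext => n; rewrite exp_ab -(sum_n_Cpartial _ n).1 sum_n_Reals.
  by apply: PartSum.sum_eq => k _; rewrite cauchy_term.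
- have := is_series_mult _ _ _ _ exp_a (is_pseries_sin b) abs_a
    (ex_series_Rabs_pseries b _ (fun k => Rabs_div_fact_le _ k (Cpow_i_bound k).2)).
  apply: is_series_ext => n; rewrite exp_ab -(sum_n_Cpartial _ n).2 sum_n_Reals.
  by apply: PartSum.sum_eq => k _; rewrite cauchy_term.
Qed.

End ExpSeries.

Section Triangular.
Local Set Implicit Arguments.
Local Open Scope nat_scope.

Definition lower_triangular (A : imat) : Prop := forall j k, j < k -> A j k = C0.
Definition upper_triangular (A : imat) : Prop := forall j k, k < j -> A j k = C0.

Lemma deltaE j k : delta j k = if j == k then C1 else C0.
Proof. by []. Qed.

Lemma delta_lower : lower_triangular delta.
Proof. by move=> j k jk; rewrite deltaE ltn_eqF. Qed.

Lemma delta_upper : upper_triangular delta.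
Proof. by move=> j k kj; rewrite deltaE gtn_eqF. Qed.

Lemma mmul_lower A B :
  lower_triangular A -> lower_triangular B -> lower_triangular (mmul A B).
Proof.
move=> lA lB j l jl; apply: Cseries_eq0 => m.
case: (leqP m j) => [mj|jm]; first by rewrite lB ?Cmulr0 // (leq_ltn_trans mj jl).
by rewrite lA ?Cmul0r.
Qed.

Lemma mmul_upper A B :
  upper_triangular A -> upper_triangular B -> upper_triangular (mmul A B).
Proof.
move=> uA uB j l lj; apply: Cseries_eq0 => m.
case: (leqP j m) => [jm|mj]; first by rewrite uB ?Cmulr0 // (leq_trans lj jm).
by rewrite uA ?Cmul0r.
Qed.

Lemma mpow_lower A k : lower_triangular A -> lower_triangular (mpow A k).
Proof. by move=> lA; elim: k => [|k IH] /=; [exact: delta_lower | exact: mmul_lower]. Qed.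

Lemma mpow_upper A k : upper_triangular A -> upper_triangular (mpow A k).
Proof. by move=> uA; elim: k => [|k IH] /=; [exact: delta_upper | exact: mmul_upper]. Qed.

Lemma mexp_lower s A : lower_triangular A -> lower_triangular (mexp s A).
Proof.
by move=> lA j l jl; apply: Cseries_eq0 => k; rewrite (mpow_lower k lA j l jl) Cmulr0.
Qed.

Lemma mexp_upper s A : upper_triangular A -> upper_triangular (mexp s A).
Proof.
by move=> uA j l lj; apply: Cseries_eq0 => k; rewrite (mpow_upper k uA j l lj) Cmulr0.
Qed.

Lemma mmul_diag A B j : (forall m, m != j -> Cmul (A j m) (B m j) = C0) ->
  mmul A B j j = Cmul (A j j) (B j j).
Proof. exact: Cseries_single. Qed.

Lemma mpow_diag A k j : lower_triangular A \/ upper_triangular A ->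
  mpow A k j j = Cpow (A j j) k.
Proof.
move=> tA; elim: k => [|k IH] /=; first by rewrite deltaE eqxx.
rewrite mmul_diag ?IH // => m; rewrite neq_ltn => /orP[mj|jm]; case: tA => [lA|uA].
- by rewrite (mpow_lower k lA m j mj) Cmulr0.
- by rewrite uA ?Cmul0r.
- by rewrite lA ?Cmul0r.
- by rewrite (mpow_upper k uA m j jm) Cmulr0.
Qed.

Lemma mexp_diag s A j : lower_triangular A \/ upper_triangular A ->
  mexp s A j j = Cexp (Cmul s (A j j)).
Proof.
move=> tA; rewrite -Cexp_series /mexp; congr Cseries; apply: functional_extensionality => k.
by rewrite mpow_diag // exp_term_mul.
Qed.

End Triangular.

Section Toeplitz.
Local Open Scope Z_scope.

Lemma Toep_diag a j : Toep a j j = a 0.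
Proof. by rewrite /Toep Z.sub_diag. Qed.

Lemma Toep_sym_plus_lower a : lower_triangular (Toep (sym_plus a)).
Proof.
move=> j k /ltP jk; rewrite /Toep /sym_plus.
by have /Z.leb_gt -> : Z.of_nat j - Z.of_nat k < 0 by lia.
Qed.

Lemma Toep_sym_minus_upper a : upper_triangular (Toep (sym_minus a)).
Proof.
move=> j k /ltP kj; rewrite /Toep /sym_minus.
by have /Z.ltb_ge -> : 0 <= Z.of_nat j - Z.of_nat k by lia.
Qed.

End Toeplitz.

Section Determinant.
Local Open Scope ring_scope.

Lemma ltbE m n : Nat.ltb m n = (m < n)%N.
Proof. by apply/idP/idP => [/Nat.ltb_lt/ltP | /ltP/Nat.ltb_lt]. Qed.

Lemma Cdet_det n f : toC (Cdet n f) = \det (\matrix_(i < n, j < n) toC (f i j)).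
Proof.
elim: n f => [|n IH] f; first by rewrite det_mx00.
rewrite -[Cdet _ _]/(Csum _ _) toC_sum (expand_det_row _ ord0); apply: eq_bigr => j _.
rewrite !toC_mul toC_pow toC_opp toC1 IH /cofactor mxE add0n -mulrA mulrCA.
congr (_ * (_ * \det _)); apply/matrixP => a b; rewrite !mxE /minor0 /=.
by rewrite ltbE /bump; case: ltnP => _; rewrite ?add0n ?add1n.
Qed.

Definition block n (A : imat) : 'M[R[i]]_n := \matrix_(i < n, j < n) toC (A i j).

Lemma toC_det_IPnXPn_sub n A : toC (det_IPnXPn n (msub A delta)) = \det (block n A).
Proof.
rewrite /det_IPnXPn Cdet_det; congr (\det _); apply/matrixP => i j.
by rewrite !mxE /msub /Csub !toC_add toC_opp addrC subrK.
Qed.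

Lemma block_mmul n A B :
  (forall i j m, (i < n)%N -> (j < n)%N -> (n <= m)%N -> Cmul (A i m) (B m j) = C0) ->
  block n (mmul A B) = block n A *m block n B.
Proof.
move=> AB0; apply/matrixP => i j; rewrite !mxE /mmul (Cseries_eq_Csum _ n) => [|m nm].
  by rewrite toC_sum; apply: eq_bigr => m _; rewrite !mxE toC_mul.
exact: AB0.
Qed.

Lemma block_mmul_lower n A B : lower_triangular A -> block n (mmul A B) = block n A *m block n B.
Proof. by move=> lA; apply: block_mmul => i j m ilt _ nm; rewrite lA ?Cmul0r // (leq_trans ilt nm). Qed.

Lemma block_mmul_upper n A B : upper_triangular B -> block n (mmul A B) = block n A *m block n B.
Proof. by move=> uB; apply: block_mmul => i j m _ jlt nm; rewrite uB ?Cmulr0 // (leq_trans jlt nm). Qed.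

Lemma det_block_triangular n A : lower_triangular A \/ upper_triangular A ->
  \det (block n A) = \prod_(i < n) toC (A i i).
Proof.
case=> [lA|uA].
  rewrite det_trig; first by apply: eq_bigr => i _; rewrite mxE.
  by apply/is_trig_mxP => i j ij; rewrite mxE lA.
rewrite -det_tr det_trig; first by apply: eq_bigr => i _; rewrite !mxE.
by apply/is_trig_mxP => i j ij; rewrite !mxE uA.
Qed.

Lemma det_block_mexp s n A : lower_triangular A \/ upper_triangular A ->
  \det (block n (mexp s A)) = \prod_(i < n) toC (Cexp (Cmul s (A i i))).
Proof.
move=> tA; rewrite det_block_triangular; last first.
  by case: tA => [lA|uA]; [left; exact: mexp_lower | right; exact: mexp_upper].
by apply: eq_bigr => i _; rewrite mexp_diag.
Qed.

Lemma toC_Cexp_trace s n A :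
  toC (Cexp (Copp (Cmul s (trace_Pn n A)))) = \prod_(i < n) toC (Cexp (Cmul (Copp s) (A i i))).
Proof.
rewrite -(toC_Cexp_sum n (fun i => Cmul (Copp s) (A i i))); congr (toC (Cexp _)).
apply: toC_inj; rewrite toC_opp toC_mul !toC_sum mulr_sumr -sumrN.
by apply: eq_bigr => i _; rewrite toC_mul toC_opp mulNr.
Qed.

Lemma prod_Cexp_Toep_diag s a n :
  \prod_(i < n) toC (Cexp (Cmul s (Toep a i i))) = toC (Cexp (Cmul s (a Z0))) ^+ n.
Proof. by under eq_bigr do rewrite Toep_diag; rewrite prodr_const card_ord. Qed.

End Determinant.

Theorem lemma4p2 (phi : Z -> Cplx) (Hphi : abs_summable phi) (t : Cplx) (n : nat) :
  Cmul (det_IPnXPn n (msub (mexp t (Toep phi)) delta))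
       (Cexp (Copp (Cmul t (trace_Pn n (Toep phi)))))
  = det_IPnXPn n
      (msub (mmul (mmul (mexp (Copp t) (Toep (sym_plus phi)))
                        (mexp t (Toep phi)))
                  (mexp (Copp t) (Toep (sym_minus phi))))
            delta).
Proof.
have lower_plus := Toep_sym_plus_lower phi.
have upper_minus := Toep_sym_minus_upper phi.
apply: toC_inj; rewrite toC_mul !toC_det_IPnXPn_sub.
rewrite block_mmul_upper; last exact: mexp_upper.
rewrite block_mmul_lower; last exact: mexp_lower.
rewrite !det_mulmx (det_block_mexp _ _ _ (or_introl lower_plus)).
rewrite (det_block_mexp _ _ _ (or_intror upper_minus)).
rewrite toC_Cexp_trace !prod_Cexp_Toep_diag /= Cmulr0 Cexp_0 toC1 expr1n mulr1.
exact: mulrC.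
Qed.
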